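(* Let $\theta\colon G\curvearrowright\Omega$ and $\theta'\colon H\curvearrowright\Omega'$ be partial actions of discrete groups on topological spaces with $\theta\approx\theta'$. Then there is a partial action $\gamma$ of $G\times H$ on a topological space such that $\theta\xleftarrow{\approx}\gamma\xrightarrow{\approx}\theta'$, i.e. there are direct dynamical equivalences from $\gamma$ to $\theta$ and from $\gamma$ to $\theta'$.
   Context: For a partial action $\theta\colon G\curvearrowright\Omega$, $\Omega_g$ denotes the domain (open) of $\theta_{g^{-1}}$, so $\theta_g\colon\Omega_{g^{-1}}\to\Omega_g$, and $g.x=\theta_g(x)$. Dynamical equivalence $\theta\approx\theta'$ means: there are a homeomorphism $\varphi\colon\Omega\to\Omega'$ and continuous maps $a\colon\bigcup_{g\in G}\{g\}\times\Omega_{g^{-1}}\to H$, $b\colon\bigcup_{h\in H}\{h\}\times\Omega'_{h^{-1}}\to G$ ($G,H$ discrete) such that for all $g\in G,h\in H,x\in\Omega_{g^{-1}},y\in\Omega'_{h^{-1}}$: (1) $\varphi(x)\in\Omega'_{a(g,x)^{-1}}$ and $\varphi(g.x)=a(g,x).\varphi(x)$; (2) $\varphi^{-1}(y)\in\Omega_{b(h,y)^{-1}}$ and $\varphi^{-1}(h.y)=b(h,y).\varphi^{-1}(y)$; (3) $b(a(g,x),\varphi(x))=g$ and $a(b(h,y),\varphi^{-1}(y))=h$; (4) $a(g'g,x)=a(g',g.x)a(g,x)$ if $g.x\in\Omega_{g'^{-1}}$; (5) $b(h'h,y)=b(h',h.y)b(h,y)$ if $h.y\in\Omega'_{h'^{-1}}$.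 Given a group homomorphism $\Psi\colon G\to H$, a continuous map $\varphi\colon\Omega\to\Omega'$ is $\Psi$-equivariant if $\varphi(\Omega_g)\subseteq\Omega'_{\Psi(g)}$ for all $g$ and $\varphi(g.x)=\Psi(g).\varphi(x)$ for $x\in\Omega_{g^{-1}}$. A pair $(\varphi,\Psi)$ with $\varphi$ $\Psi$-equivariant is a direct dynamical equivalence, written $\theta\xrightarrow{\approx}\theta'$, if (a) $\varphi$ is a homeomorphism, (b) $\Omega_g\cap\Omega_{g'}=\emptyset$ for all $g\ne g'$ with $\Psi(g)=\Psi(g')$, (c) $\Omega'_h=\bigcup_{\Psi(g)=h}\varphi(\Omega_g)$ for all $h\in H$. *)

From Stdlib Require Import Classical.

Set Implicit Arguments.

Record Group := {
  gcar :> Type;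
  gmul : gcar -> gcar -> gcar;
  gone : gcar;
  ginv : gcar -> gcar;
  gmulA : forall x y z, gmul x (gmul y z) = gmul (gmul x y) z;
  gmul1 : forall x, gmul gone x = x;
  gmulV : forall x, gmul (ginv x) x = gone
}.

Arguments gmul {g}.
Arguments gone {g}.
Arguments ginv {g}.

Definition is_hom {G H : Group} (Psi : G -> H) : Prop :=
  forall g g' : G, Psi (gmul g g') = gmul (Psi g) (Psi g').

Section Prod.
Variables G H : Group.
Definition pmul (p q : G * H) : G * H := (gmul (fst p) (fst q), gmul (snd p) (snd q)).
Definition pone : G * H := (gone, gone).
Definition pinv (p : G * H) : G * H := (ginv (fst p), ginv (snd p)).
Lemma pmulA : forall x y z, pmul x (pmul y z) = pmul (pmul x y) z.
Proof. intros [] [] []; unfold pmul; simpl; rewrite !gmulA; reflexivity. Qed.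
Lemma pmul1 : forall x, pmul pone x = x.
Proof. intros []; unfold pmul, pone; simpl; rewrite !gmul1; reflexivity. Qed.
Lemma pmulV : forall x, pmul (pinv x) x = pone.
Proof. intros []; unfold pmul, pinv, pone; simpl; rewrite !gmulV; reflexivity. Qed.
End Prod.

Definition prodGroup (G H : Group) : Group :=
  {| gcar := (gcar G * gcar H)%type; gmul := @pmul G H; gone := pone G H;
     ginv := @pinv G H; gmulA := @pmulA G H; gmul1 := @pmul1 G H;
     gmulV := @pmulV G H |}.

Record Topology := {
  tcar :> Type;
  is_open : (tcar -> Prop) -> Prop;
  open_full : is_open (fun _ => True);
  open_inter : forall U V, is_open U -> is_open V -> is_open (fun x => U x /\ V x);
  open_union : forall F : (tcar -> Prop) -> Prop,
      (forall U, F U -> is_open U) -> is_open (fun x => exists U, F U /\ U x)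
}.

Arguments is_open {t}.

Definition continuous_on {X Y : Topology} (D : X -> Prop) (f : X -> Y) : Prop :=
  forall V, is_open V -> exists U, is_open U /\ forall x, D x -> (V (f x) <-> U x).

Definition continuous {X Y : Topology} (f : X -> Y) : Prop :=
  @continuous_on X Y (fun _ => True) f.

(* f : D -> H is continuous, where D is a subspace of X and H is discrete
   (i.e. f is locally constant on D) *)
Definition continuous_to_discrete {X : Topology} {K : Type} (D : X -> Prop)
  (f : X -> K) : Prop :=
  forall k, exists U, is_open U /\ forall x, D x -> (f x = k <-> U x).

Definition is_homeo {X Y : Topology} (f : X -> Y) : Prop :=
  continuous f /\
  exists g : Y -> X, continuous g /\ (forall x, g (f x) = x) /\ (forall y, f (g y) = y).

(* ---------- Partial actions ----------
   pdom g = Omega_g (open), pact g = theta_g : Omega_{g^-1} -> Omega_g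
   (a total function, only meaningful on Omega_{g^-1}). *)
Record PartialAction (G : Group) (X : Topology) := {
  pdom : G -> X -> Prop;
  pact : G -> X -> X;
  pdom_open : forall g, is_open (pdom g);
  pdom_one : forall x, pdom gone x;
  pact_one : forall x, pact gone x = x;
  pact_dom : forall g x, pdom (ginv g) x -> pdom g (pact g x);
  pact_cont : forall g, continuous_on (pdom (ginv g)) (pact g);
  pact_comp : forall g h x, pdom (ginv h) x -> pdom (ginv g) (pact h x) ->
      pdom (ginv (gmul g h)) x /\ pact (gmul g h) x = pact g (pact h x)
}.

Arguments pdom {G X}.
Arguments pact {G X}.

Definition dyn_equiv {G H : Group} {X Y : Topology}
  (th : PartialAction G X) (th' : PartialAction H Y) : Prop :=
  exists (phi : X -> Y) (phiinv : Y -> X) (a : G -> X -> H) (b : H -> Y -> G),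
    continuous phi /\ continuous phiinv /\
    (forall x, phiinv (phi x) = x) /\ (forall y, phi (phiinv y) = y) /\
    (forall g, continuous_to_discrete (pdom th (ginv g)) (a g)) /\
    (forall h, continuous_to_discrete (pdom th' (ginv h)) (b h)) /\
    (forall g x, pdom th (ginv g) x ->
       pdom th' (ginv (a g x)) (phi x) /\ phi (pact th g x) = pact th' (a g x) (phi x)) /\
    (forall h y, pdom th' (ginv h) y ->
       pdom th (ginv (b h y)) (phiinv y) /\
       phiinv (pact th' h y) = pact th (b h y) (phiinv y)) /\
    (forall g x, pdom th (ginv g) x -> b (a g x) (phi x) = g) /\
    (forall h y, pdom th' (ginv h) y -> a (b h y) (phiinv y) = h) /\
    (forall g g' x, pdom th (ginv g) x -> pdom th (ginv g') (pact th g x) ->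
       a (gmul g' g) x = gmul (a g' (pact th g x)) (a g x)) /\
    (forall h h' y, pdom th' (ginv h) y -> pdom th' (ginv h') (pact th' h y) ->
       b (gmul h' h) y = gmul (b h' (pact th' h y)) (b h y)).

Definition equivariant {G H : Group} {X Y : Topology}
  (th : PartialAction G X) (th' : PartialAction H Y) (Psi : G -> H) (phi : X -> Y) :=
  continuous phi /\
  (forall g x, pdom th g x -> pdom th' (Psi g) (phi x)) /\
  (forall g x, pdom th (ginv g) x -> phi (pact th g x) = pact th' (Psi g) (phi x)).

Definition direct_equiv_via {G H : Group} {X Y : Topology}
  (th : PartialAction G X) (th' : PartialAction H Y) (phi : X -> Y) (Psi : G -> H) :=
  is_hom Psi /\ equivariant th th' Psi phi /\
  is_homeo phi /\
  (forall g g' : G, g <> g' -> Psi g = Psi g' ->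
     forall x, ~ (pdom th g x /\ pdom th g' x)) /\
  (forall h y, pdom th' h y <-> exists g x, Psi g = h /\ pdom th g x /\ phi x = y).

Definition direct_equiv {G H : Group} {X Y : Topology}
  (th : PartialAction G X) (th' : PartialAction H Y) : Prop :=
  exists phi Psi, direct_equiv_via th th' phi Psi.

(* The cocycle [a] of the dynamical equivalence is used to build [gamma] on
   the space of [theta] itself: [gamma_(g,h)] is [theta_g], restricted to the
   points [x] where [a(g, x) = h]. Since [a(g, .)] is locally constant these
   domains are open, and the cocycle identity makes [gamma] a partial action.
   Projecting to [G] recovers [theta] (the domains [Omega_(g,h)] for fixed [g]
   partition [Omega_g]), while projecting to [H] and transporting along [phi]
   recovers [theta']; the inverse cocycle [b] gives surjectivity and the
   identity [b(a(g, x), phi x) = g] gives disjointness. *)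
From Stdlib Require Import Classical FunctionalExtensionality PropExtensionality.

Lemma gmulrV (G : Group) (x : G) : gmul x (ginv x) = gone.
Proof.
  rewrite <- (gmul1 _ (gmul x (ginv x))), <- (gmulV _ (ginv x)) at 1.
  rewrite <- gmulA, (gmulA _ (ginv x) x (ginv x)), gmulV, gmul1.
  apply gmulV.
Qed.

Lemma gmul1r (G : Group) (x : G) : gmul x gone = x.
Proof. rewrite <- (gmulV _ x), gmulA, gmulrV, gmul1. reflexivity. Qed.

Lemma ginvK (G : Group) (x : G) : ginv (ginv x) = x.
Proof.
  rewrite <- (gmul1r _ (ginv (ginv x))), <- (gmulV _ x), gmulA, gmulV, gmul1.
  reflexivity.
Qed.

Lemma ginv_inj (G : Group) (x y : G) : ginv x = ginv y -> x = y.
Proof. intros E. rewrite <- (ginvK _ x), E, ginvK. reflexivity. Qed.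

Lemma gmul_eq1_inv (G : Group) (u v : G) : gmul u v = gone -> u = ginv v.
Proof.
  intros E. rewrite <- (gmul1r _ u), <- (gmulrV _ v), gmulA, E, gmul1.
  reflexivity.
Qed.

Lemma ginv1 (G : Group) : ginv (@gone G) = gone.
Proof. symmetry. apply gmul_eq1_inv, gmul1. Qed.

Lemma gidem_eq1 (G : Group) (u : G) : gmul u u = u -> u = gone.
Proof.
  intros E. transitivity (gmul (gmul (ginv u) u) u).
  - rewrite gmulV, gmul1. reflexivity.
  - rewrite <- gmulA, E, gmulV. reflexivity.
Qed.

Lemma is_open_ext {X : Topology} (U V : X -> Prop) :
  (forall x, U x <-> V x) -> is_open U -> is_open V.
Proof.
  intros E. replace V with U; [trivial|].
  apply functional_extensionality; intros x.
  apply propositional_extensionality, E.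
Qed.

Lemma continuous_id (Z : Topology) : continuous (fun z : Z => z).
Proof. intros V oV. exists V. tauto. Qed.

Definition cocycle {G H : Group} {X : Topology} (th : PartialAction G X)
  (a : G -> X -> H) : Prop :=
  forall g g' x, pdom th (ginv g) x -> pdom th (ginv g') (pact th g x) ->
    a (gmul g' g) x = gmul (a g' (pact th g x)) (a g x).

Section CocycleAction.

Variables (G H : Group) (X : Topology) (th : PartialAction G X).
Variable a : G -> X -> H.
Hypothesis a_cont : forall g, continuous_to_discrete (pdom th (ginv g)) (a g).
Hypothesis a_cocycle : cocycle th a.

Lemma cocycle_one x : a gone x = gone.
Proof.
  apply gidem_eq1.
  assert (D : pdom th (ginv gone) x) by (rewrite ginv1; apply pdom_one).
  assert (D' : pdom th (ginv gone) (pact th gone x)) by (rewrite pact_one; exact D).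
  pose proof (a_cocycle gone gone x D D') as E.
  rewrite gmul1, pact_one in E. symmetry. exact E.
Qed.

Lemma cocycle_inv g x :
  pdom th (ginv g) x -> a (ginv g) (pact th g x) = ginv (a g x).
Proof.
  intros D. apply gmul_eq1_inv.
  assert (D' : pdom th (ginv (ginv g)) (pact th g x))
    by (rewrite ginvK; apply pact_dom, D).
  rewrite <- (a_cocycle g (ginv g) x D D'), gmulV. apply cocycle_one.
Qed.

(* [Omega_(g,h)]; the condition is stated via [g^-1, h^-1] so that
   [Omega_((g,h)^-1)] is the set of [x] in [Omega_(g^-1)] with [a(g, x) = h]. *)
Definition cocycle_dom (p : prodGroup G H) (x : X) : Prop :=
  pdom th (fst p) x /\ a (ginv (fst p)) x = ginv (snd p).

Lemma cocycle_dom_inv g h x :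
  cocycle_dom (ginv ((g, h) : prodGroup G H)) x <-> pdom th (ginv g) x /\ a g x = h.
Proof. unfold cocycle_dom; simpl. rewrite !ginvK. tauto. Qed.

Lemma cocycle_dom_open p : is_open (cocycle_dom p).
Proof.
  destruct p as [g h]. destruct (a_cont (ginv g) (ginv h)) as [U [oU HU]].
  rewrite ginvK in HU.
  apply (is_open_ext (fun x => pdom th g x /\ U x)).
  - intros x. unfold cocycle_dom; simpl.
    split; intros [D E]; split; trivial; apply (HU x D); trivial.
  - apply open_inter; [apply pdom_open | exact oU].
Qed.

Lemma cocycle_dom_one x : cocycle_dom gone x.
Proof.
  split; simpl; [apply pdom_one|]. rewrite !ginv1. apply cocycle_one.
Qed.

Lemma cocycle_act_dom p x :
  cocycle_dom (ginv p) x -> cocycle_dom p (pact th (fst p) x).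
Proof.
  destruct p as [g h]. intros [D E]%cocycle_dom_inv.
  split; simpl; [apply pact_dom, D|].
  rewrite cocycle_inv, E by exact D. reflexivity.
Qed.

Lemma cocycle_act_cont p :
  continuous_on (cocycle_dom (ginv p)) (pact th (fst p)).
Proof.
  destruct p as [g h]. intros V oV.
  destruct (pact_cont th g V oV) as [U [oU HU]].
  exists U. split; [exact oU|]. intros x [D _]%cocycle_dom_inv. apply HU, D.
Qed.

Lemma cocycle_act_comp p q x :
  cocycle_dom (ginv q) x -> cocycle_dom (ginv p) (pact th (fst q) x) ->
  cocycle_dom (ginv (gmul p q)) x /\
  pact th (fst (gmul p q)) x = pact th (fst p) (pact th (fst q) x).
Proof.
  destruct p as [g1 h1], q as [g2 h2]; simpl.
  intros [D2 E2]%cocycle_dom_inv [D1 E1]%cocycle_dom_inv.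
  destruct (pact_comp th g1 g2 x D2 D1) as [D C].
  split; [|exact C].
  apply (cocycle_dom_inv (gmul g1 g2) (gmul h1 h2)). split; [exact D|].
  rewrite (a_cocycle g2 g1 x D2 D1), E1, E2. reflexivity.
Qed.

Definition cocycle_action : PartialAction (prodGroup G H) X :=
  {| pdom := cocycle_dom;
     pact := fun p => pact th (fst p);
     pdom_open := cocycle_dom_open;
     pdom_one := cocycle_dom_one;
     pact_one := pact_one th;
     pact_dom := cocycle_act_dom;
     pact_cont := cocycle_act_cont;
     pact_comp := cocycle_act_comp |}.

Lemma cocycle_action_direct_equiv_fst :
  direct_equiv_via cocycle_action th (fun x => x) (fun p => fst p).
Proof.
  split; [intros p q; reflexivity|].
  split; [|split; [|split]].
  - split; [apply continuous_id|].
    split; [intros p x [D _]; exact D | reflexivity].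
  - split; [apply continuous_id|].
    exists (fun x => x). split; [apply continuous_id | tauto].
  - intros [g h] [g' h'] ne E x [[_ F] [_ F']]; simpl in *. subst g'.
    apply ne. f_equal. apply ginv_inj. rewrite <- F, <- F'. reflexivity.
  - intros g y. split.
    + intros D. exists ((g, ginv (a (ginv g) y)) : prodGroup G H), y.
      repeat split; trivial. simpl. rewrite ginvK. reflexivity.
    + intros [[g' h'] [x [E [[D _] F]]]]; simpl in *. subst. exact D.
Qed.

Section Transport.

Variables (Y : Topology) (th' : PartialAction H Y).
Variables (phi : X -> Y) (phiinv : Y -> X) (b : H -> Y -> G).
Hypothesis phi_homeo : is_homeo phi.
Hypothesis phiinvK : forall y, phi (phiinv y) = y.
Hypothesis a_equiv : forall g x, pdom th (ginv g) x ->
  pdom th' (ginv (a g x)) (phi x) /\ phi (pact th g x) = pact th' (a g x) (phi x).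
Hypothesis b_dom : forall h y, pdom th' (ginv h) y -> pdom th (ginv (b h y)) (phiinv y).
Hypothesis baK : forall g x, pdom th (ginv g) x -> b (a g x) (phi x) = g.
Hypothesis abK : forall h y, pdom th' (ginv h) y -> a (b h y) (phiinv y) = h.

Lemma cocycle_dom_phi p x : cocycle_dom p x -> pdom th' (snd p) (phi x).
Proof.
  destruct p as [g h]. intros [D E]; simpl in *.
  rewrite <- (ginvK _ g) in D.
  destruct (a_equiv _ _ D) as [D' _]. rewrite E, ginvK in D'. exact D'.
Qed.

Lemma cocycle_action_direct_equiv_snd :
  direct_equiv_via cocycle_action th' phi (fun p => snd p).
Proof.
  split; [intros p q; reflexivity|].
  split; [|split; [exact phi_homeo|split]].
  - split; [apply phi_homeo|]. split; [exact cocycle_dom_phi|].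
    intros [g h] x [D E]%cocycle_dom_inv; simpl.
    rewrite (proj2 (a_equiv _ _ D)), E. reflexivity.
  - intros [g h] [g' h'] ne E x [[D F] [D' F']]; simpl in *. subst h'.
    rewrite <- (ginvK _ g) in D. rewrite <- (ginvK _ g') in D'.
    apply ne. f_equal. apply ginv_inj.
    rewrite <- (baK _ _ D), <- (baK _ _ D'), F, F'. reflexivity.
  - intros h y. split.
    + intros D. rewrite <- (ginvK _ h) in D.
      exists ((ginv (b (ginv h) y), h) : prodGroup G H), (phiinv y).
      repeat split; trivial; simpl.
      * apply b_dom, D.
      * rewrite ginvK. apply abK, D.
    + intros [p [x [E [D F]]]]. subst. apply cocycle_dom_phi, D.
Qed.

End Transport.

End CocycleAction.

Arguments cocycle_action {G H X th a}.

Theorem proposition3 (G H : Group) (X Y : Topology)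
  (th : PartialAction G X) (th' : PartialAction H Y) :
  dyn_equiv th th' ->
  exists (Z : Topology) (ga : PartialAction (prodGroup G H) Z),
    direct_equiv ga th /\ direct_equiv ga th'.
Proof.
  intros (phi & phiinv & a & b & cphi & cphiinv & phiK & phiinvK & ca & _ &
          a_equiv & b_equiv & baK & abK & a_cocycle & _).
  exists X, (cocycle_action ca a_cocycle). split.
  - exists (fun x => x), (fun p => fst p).
    apply cocycle_action_direct_equiv_fst.
  - exists phi, (fun p => snd p).
    apply cocycle_action_direct_equiv_snd with phiinv b; trivial.
    + split; [exact cphi|].
      exists phiinv. split; [exact cphiinv | split; [exact phiK | exact phiinvK]].
    + intros h y D. apply (b_equiv h y D).
Qed.
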